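(* Let $n,N,M$ be non-negative integers with $M\le N\le 2n-3$, and let $f$ be an $(n,N,M)$ $\mathbf{F}$-sequence with $M<N$ or $N<2n-3$. Then: 1. If $M<N-2$, setting $f_{N,M+1}$ to $f_{N-1,N-1}-1$ if $f_{N-1,M+1}=f_{N-1,N-1}$, and otherwise to either of $L_f(N,M+1)$ or $U_f(N,M+1)$, yields an $(n,N,M+1)$ $\mathbf{F}$-sequence. 2. If $M=N-2$, setting $f_{N,N-1}=f_{N-1,N-1}-1$ yields an $(n,N,N-1)$ $\mathbf{F}$-sequence. 3. If $M=N-1$, setting $f_{N,N}=f_{N-1,N-1}-1$ when $f_{N-1,N-1}>1$, or setting $f_{N,N}=f_{N-1,N-1}+1$ when $f_{N-1,N-1}<2n-N-1$, in either case yields an $(n,N,N)$ $\mathbf{F}$-sequence. 4. If $M=N$, setting $f_{N+1,0}$ to $f_{N,N}-1$ if $f_{N,0}=f_{N,N}$, and otherwise to either of $\max(0,f_{N,0}-1)$ or $f_{N,0}$, yields an $(n,N+1,0)$ $\mathbf{F}$-sequence.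
   Context: For a doubly indexed sequence (or matrix) $f$, define, with the convention that $f_{k,\ell}=0$ whenever $k$ or $\ell$ is negative, $$L_f(i,j):=\max\bigl(f_{i,j-1},\ f_{i-1,j}-1,\ f_{i,j-1}+f_{i-1,j}-f_{i-1,j-1}-1\bigr),\qquad U_f(i,j):=\min\bigl(f_{i-1,j},\ f_{i,j-1}+f_{i-1,j}-f_{i-1,j-1}\bigr).$$ Let $n,N,M$ be non-negative integers with $M\le N\le 2n-3$ and put $B=\max(N-1,M)$. An $(n,N,M)$ $\mathbf{F}$-sequence is a doubly indexed sequence $f_{i,j}$ of non-negative integers defined exactly for the (''valid'') indices $(i,j)$ in $\{(i,j):0\le j\le i\le N-1\}\cup\{(N,j):0\le j\le M\}$, such that: (1) the diagonal entries $f_{i,i}$, $0\le i\le B$, are positive integers with $f_{0,0}=2$, $f_{i,i}=f_{i-1,i-1}\pm1$ for $1\le i\le B$, and $f_{i,i}\le 2n-i-2$ for $0\le i\le B$; (2) $L_f(i,j)\le f_{i,j}\le U_f(i,j)$ for all valid indices $(i,j)$ with $0\le j\le i-2$; (3) for all valid indices $(i,j)$ with $0\le j\le i-1$, if $f_{i-1,j}=f_{i-1,i-1}$ then $f_{i,j}=f_{i-1,i-1}-1$. *)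

From mathcomp Require Import all_boot all_order all_algebra.
Set Implicit Arguments. Unset Strict Implicit. Unset Printing Implicit Defensive.
Import Order.TTheory GRing.Theory Num.Theory.
Local Open Scope ring_scope.

(* A doubly indexed sequence is represented as a total function
   nat -> nat -> int; only its values at valid indices matter. *)

(* Access with integer indices, using the convention f_{k,l} = 0 when
   k or l is negative. *)
Definition fat (f : nat -> nat -> int) (i j : int) : int :=
  match i, j with
  | Posz a, Posz b => f a b
  | _, _ => 0
  end.

Definition Lf (f : nat -> nat -> int) (i j : nat) : int :=
  let i' := i%:Z in let j' := j%:Z in
  Num.max (fat f i' (j' - 1))
    (Num.max (fat f (i' - 1) j' - 1)
             (fat f i' (j' - 1) + fat f (i' - 1) j' - fat f (i' - 1) (j' - 1) - 1)).

Definition Uf (f : nat -> nat -> int) (i j : nat) : int :=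
  let i' := i%:Z in let j' := j%:Z in
  Num.min (fat f (i' - 1) j')
          (fat f i' (j' - 1) + fat f (i' - 1) j' - fat f (i' - 1) (j' - 1)).

Definition valid (N M i j : nat) : bool :=
  ((j <= i)%N && (i < N)%N) || ((i == N) && (j <= M)%N).

(* (n,N,M) F-sequence (including the standing constraint M <= N <= 2n-3,
   the latter read in the integers). *)
Definition is_Fseq (n N M : nat) (f : nat -> nat -> int) : Prop :=
  let B := maxn N.-1 M in
  (M <= N)%N /\ N%:Z <= 2 * n%:Z - 3 /\
      (forall i j, valid N M i j -> 0 <= f i j) /\
      f 0%N 0%N = 2 /\
      (forall i, (i <= B)%N -> 0 < f i i /\ f i i <= 2 * n%:Z - i%:Z - 2) /\
      (forall i, (1 <= i <= B)%N ->
           f i i = f i.-1 i.-1 + 1 \/ f i i = f i.-1 i.-1 - 1) /\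
      (forall i j, valid N M i j -> (j + 2 <= i)%N ->
           Lf f i j <= f i j /\ f i j <= Uf f i j) /\
      (forall i j, valid N M i j -> (j < i)%N ->
           f i.-1 j = f i.-1 i.-1 -> f i j = f i.-1 i.-1 - 1).

Definition upd (f : nat -> nat -> int) (a b : nat) (x : int) : nat -> nat -> int :=
  fun i j => if (i == a) && (j == b) then x else f i j.

(* Every condition on an F-sequence is local: it constrains f_{i,j} only through
   f_{i,j-1}, f_{i-1,j}, f_{i-1,j-1} and the diagonal entry f_{i-1,i-1}.  Adding one
   entry in row-major order therefore leaves all older conditions intact, and it
   suffices to check the conditions at the new entry.  These follow from three
   invariants: each column descends by 0 or 1, rows are nondecreasing strictly
   below the diagonal, and every entry lies strictly below the diagonal entry of
   the previous row.  For the new diagonal entry f_{N-1,N-1} + 1, the bound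
   2n - N - 2 comes from parity: f_{i,i} + i is always even. *)

From mathcomp Require Import all_boot all_order all_algebra zify.
Import Order.TTheory GRing.Theory Num.Theory.
Local Open Scope ring_scope.
Set Implicit Arguments. Unset Strict Implicit.

Lemma Lf_pred f i j : (0 < i)%N -> Lf f i j.+1 =
  Num.max (f i j) (Num.max (f i.-1 j.+1 - 1) (f i j + f i.-1 j.+1 - f i.-1 j - 1)).
Proof. by move=> i_gt0; rewrite /Lf -!predn_int. Qed.

Lemma Uf_pred f i j : (0 < i)%N ->
  Uf f i j.+1 = Num.min (f i.-1 j.+1) (f i j + f i.-1 j.+1 - f i.-1 j).
Proof. by move=> i_gt0; rewrite /Uf -!predn_int. Qed.

Lemma Lf_col0 f i : (0 < i)%N -> Lf f i 0 = Num.max 0 (f i.-1 0%N - 1).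
Proof. by move=> i_gt0; rewrite /Lf -(predn_int i_gt0) /=; lia. Qed.

Lemma Uf_col0 f i : (0 < i)%N -> Uf f i 0 = f i.-1 0%N.
Proof. by move=> i_gt0; rewrite /Uf -(predn_int i_gt0) /=; lia. Qed.

Lemma upd_eq f a b x : upd f a b x a b = x.
Proof. by rewrite /upd !eqxx. Qed.

Lemma upd_neq f a b x i j : i <> a \/ j <> b -> upd f a b x i j = f i j.
Proof. by move=> neq; rewrite /upd ifF //; lia. Qed.

Lemma Lf_upd f a b x i j : (0 < i)%N -> (i < a)%N \/ (i = a /\ (j <= b)%N) ->
  Lf (upd f a b x) i j = Lf f i j.
Proof.
move=> i_gt0 before; case: j before => [|j] before.
  by rewrite !Lf_col0 // upd_neq //; lia.
by rewrite !Lf_pred // !upd_neq //; lia.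
Qed.

Lemma Uf_upd f a b x i j : (0 < i)%N -> (i < a)%N \/ (i = a /\ (j <= b)%N) ->
  Uf (upd f a b x) i j = Uf f i j.
Proof.
move=> i_gt0 before; case: j before => [|j] before.
  by rewrite !Uf_col0 // upd_neq //; lia.
by rewrite !Uf_pred // !upd_neq //; lia.
Qed.

Lemma valid00 N M : valid N M 0 0.
Proof. rewrite /valid; lia. Qed.

Lemma valid_diagE N M i : (M <= N)%N -> valid N M i i = (i <= maxn N.-1 M)%N.
Proof. by rewrite /valid => leMN; apply/idP/idP; lia. Qed.

Lemma valid_up N M i j : valid N M i j -> (j < i)%N ->
  valid N M i.-1 j /\ valid N M i.-1 i.-1.
Proof. rewrite /valid; lia. Qed.

Section FseqTheory.

Variables (n N M : nat) (f : nat -> nat -> int).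
Hypothesis Hf : is_Fseq n N M f.

Lemma Fseq_leMN : (M <= N)%N.
Proof. by case: Hf. Qed.

Lemma Fseq_leN : N%:Z <= 2 * n%:Z - 3.
Proof. by case: Hf => _ []. Qed.

Lemma Fseq_nonneg i j : valid N M i j -> 0 <= f i j.
Proof. by case: Hf => _ [_ [nonneg _]]; apply: nonneg. Qed.

Lemma Fseq_f00 : f 0 0 = 2.
Proof. by case: Hf => _ [_ [_ [f00 _]]]. Qed.

Lemma Fseq_diag_bounds i : (i <= maxn N.-1 M)%N ->
  0 < f i i /\ f i i <= 2 * n%:Z - i%:Z - 2.
Proof. by case: Hf => _ [_ [_ [_ [bounds _]]]]; apply: bounds. Qed.

Lemma Fseq_diag_step i : (1 <= i <= maxn N.-1 M)%N ->
  f i i = f i.-1 i.-1 + 1 \/ f i i = f i.-1 i.-1 - 1.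
Proof. by case: Hf => _ [_ [_ [_ [_ [step _]]]]]; apply: step. Qed.

Lemma Fseq_LU i j : valid N M i j -> (j + 2 <= i)%N ->
  Lf f i j <= f i j /\ f i j <= Uf f i j.
Proof. by case: Hf => _ [_ [_ [_ [_ [_ [LU _]]]]]]; apply: LU. Qed.

Lemma Fseq_forced i j : valid N M i j -> (j < i)%N ->
  f i.-1 j = f i.-1 i.-1 -> f i j = f i.-1 i.-1 - 1.
Proof. by case: Hf => _ [_ [_ [_ [_ [_ [_ forced]]]]]]; apply: forced. Qed.

Lemma Fseq_col_step i j : valid N M i j -> (j + 2 <= i)%N ->
  f i.-1 j - 1 <= f i j /\ f i j <= f i.-1 j.
Proof.
move=> vij le_ji; have := Fseq_LU vij le_ji.
have i_gt0 : (0 < i)%N by lia.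
by case: j vij le_ji => [|j] _ _; rewrite ?Lf_col0 ?Uf_col0 ?Lf_pred ?Uf_pred //; lia.
Qed.

Lemma Fseq_lt_prev_diag i j : valid N M i j -> (j < i)%N -> f i j <= f i.-1 i.-1 - 1.
Proof.
elim: i j => // i IHi j vij lt_ji /=.
have forced := Fseq_forced vij lt_ji; rewrite /= in forced.
have [eq_ji|lt_ji'] : j = i \/ (j < i)%N by lia.
  by rewrite forced // eq_ji.
have /= [vij' vii] := valid_up vij lt_ji.
have /= [col_lo col_hi] := Fseq_col_step vij ltac:(lia).
have [i0|i_gt0] := posnP i; first by rewrite i0 in lt_ji'.
have diag : f i i = f i.-1 i.-1 + 1 \/ f i i = f i.-1 i.-1 - 1.
  by apply: Fseq_diag_step; rewrite i_gt0 -valid_diagE // Fseq_leMN.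
have := IHi j vij' lt_ji'.
by case: (f i j =P f i i) => [/forced -> | ne]; lia.
Qed.

Lemma Fseq_row_mono i j : valid N M i j.+1 -> (j.+2 <= i)%N -> f i j <= f i j.+1.
Proof.
move=> vij1 le_ji; have vij : valid N M i j by move: vij1; rewrite /valid; lia.
have [le3_ji|lt_ij] := leqP j.+3 i.
  by have := Fseq_LU vij1 ltac:(lia); rewrite Lf_pred; lia.
have eq_i : i = j.+2 by lia.
have := Fseq_lt_prev_diag vij ltac:(lia).
by rewrite (Fseq_forced vij1) eq_i //=; lia.
Qed.

Lemma Fseq_diag_parity i : (i <= maxn N.-1 M)%N -> exists z : int, f i i + i%:Z = 2 * z.
Proof.
elim: i => [|i IHi] le_iB; first by exists 1; rewrite Fseq_f00.
have [z ez] := IHi (ltnW le_iB).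
have [->|->] := Fseq_diag_step (i := i.+1) ltac:(lia).
  by exists (z + 1); rewrite /=; lia.
by exists z; rewrite /=; lia.
Qed.

End FseqTheory.

Section Extension.

Variables (n N M N' M' a b : nat) (f : nat -> nat -> int) (x : int).
Hypothesis Hf : is_Fseq n N M f.
Hypotheses (leMN' : (M' <= N')%N) (leN'n : N'%:Z <= 2 * n%:Z - 3).
Hypothesis valid_new : forall i j, valid N' M' i j -> valid N M i j \/ (i = a /\ j = b).
Hypothesis valid_before : forall i j, valid N M i j -> (i < a)%N \/ (i = a /\ (j < b)%N).
Hypothesis x_ge0 : 0 <= x.
Hypothesis x_diag : a = b ->
  [/\ 0 < x, x <= 2 * n%:Z - a%:Z - 2 & x = f a.-1 a.-1 + 1 \/ x = f a.-1 a.-1 - 1].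
Hypothesis x_LU : (b + 2 <= a)%N -> Lf f a b <= x /\ x <= Uf f a b.
Hypothesis x_forced : (b < a)%N -> f a.-1 b = f a.-1 a.-1 -> x = f a.-1 a.-1 - 1.

Local Notation g := (upd f a b x).

Lemma upd_valid i j : valid N M i j -> g i j = f i j.
Proof. by move=> /valid_before before; apply: upd_neq; lia. Qed.

Lemma extend_nonneg i j : valid N' M' i j -> 0 <= g i j.
Proof.
case/valid_new => [vij | [-> ->]]; last by rewrite upd_eq.
by rewrite upd_valid //; apply: Fseq_nonneg Hf _ _ vij.
Qed.

Lemma extend_diag_bounds i : (i <= maxn N'.-1 M')%N ->
  0 < g i i /\ g i i <= 2 * n%:Z - i%:Z - 2.
Proof.
rewrite -valid_diagE // => /valid_new [vii | [-> eq_ab]].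
  by rewrite upd_valid //; apply: (Fseq_diag_bounds Hf); rewrite -valid_diagE ?(Fseq_leMN Hf).
have [x_gt0 x_le _] := x_diag eq_ab.
by rewrite /upd eq_ab !eqxx -eq_ab.
Qed.

Lemma extend_diag_step i : (1 <= i <= maxn N'.-1 M')%N ->
  g i i = g i.-1 i.-1 + 1 \/ g i i = g i.-1 i.-1 - 1.
Proof.
case/andP=> i_gt0 le_iB'; have leMN := Fseq_leMN Hf.
have vii1 : valid N M i.-1 i.-1.
  have /valid_new [//|[eq_ia _]] : valid N' M' i.-1 i.-1 by rewrite valid_diagE //; lia.
  have /valid_new vii' : valid N' M' i i by rewrite valid_diagE.
  by exfalso; case: vii' => [/valid_before|]; lia.
rewrite -valid_diagE // in le_iB'; case/valid_new: le_iB' => [vii | [eq_ia eq_ib]].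
  by rewrite !upd_valid //; apply: (Fseq_diag_step Hf); rewrite i_gt0 -valid_diagE.
have eq_ab : a = b by rewrite -eq_ia.
rewrite (upd_valid vii1) /upd eq_ia eq_ab !eqxx -eq_ab.
by case: (x_diag eq_ab).
Qed.

Lemma extend_LU i j : valid N' M' i j -> (j + 2 <= i)%N ->
  Lf g i j <= g i j /\ g i j <= Uf g i j.
Proof.
move=> vij' le_ji; have i_gt0 : (0 < i)%N by lia.
case/valid_new: vij' => [vij | [eq_ia eq_jb]].
  have before : (i < a)%N \/ (i = a /\ (j <= b)%N) by have := valid_before vij; lia.
  by rewrite upd_valid // Lf_upd // Uf_upd //; apply: (Fseq_LU Hf).
have before : (i < a)%N \/ (i = a /\ (j <= b)%N) by lia.
by rewrite Lf_upd // Uf_upd // eq_ia eq_jb upd_eq; apply: x_LU; rewrite -eq_ia -eq_jb.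
Qed.

Lemma extend_forced i j : valid N' M' i j -> (j < i)%N ->
  g i.-1 j = g i.-1 i.-1 -> g i j = g i.-1 i.-1 - 1.
Proof.
case/valid_new => [vij | [-> ->]] lt_ji.
  have [vij1 vii1] := valid_up vij lt_ji.
  by rewrite !upd_valid //; apply: (Fseq_forced Hf).
by rewrite upd_eq !upd_neq; [apply: x_forced | lia..].
Qed.

Lemma Fseq_extend : is_Fseq n N' M' g.
Proof.
split=> //; split=> //.
split; first exact: extend_nonneg.
split; first by rewrite upd_valid ?valid00 // (Fseq_f00 Hf).
split; first exact: extend_diag_bounds.
split; first exact: extend_diag_step.
split; [exact: extend_LU | exact: extend_forced].
Qed.

End Extension.

Section OneStepExtensions.

Variables (n N M : nat) (f : nat -> nat -> int).
Hypothesis Hf : is_Fseq n N M f.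

Lemma Fseq_extend_row x : (M + 2 < N)%N ->
  (if f N.-1 M.+1 == f N.-1 N.-1 then x = f N.-1 N.-1 - 1
   else x = Lf f N M.+1 \/ x = Uf f N M.+1) ->
  is_Fseq n N M.+1 (upd f N M.+1 x).
Proof.
move=> ltMN hx; have N_gt0 : (0 < N)%N by lia.
have vNM : valid N M N M by rewrite /valid; lia.
have vN1 j : (j < N)%N -> valid N M N.-1 j by rewrite /valid; lia.
have f_NM_ge0 := Fseq_nonneg Hf vNM.
have [col_lo col_hi] := Fseq_col_step Hf vNM ltac:(lia).
have row := Fseq_row_mono Hf (vN1 M.+1 ltac:(lia)) ltac:(lia).
have [diag_pos _] := Fseq_diag_bounds Hf (i := N.-1) ltac:(lia).
have le_diag : f N.-1 M <= f N.-1 N.-1.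
  have := Fseq_lt_prev_diag Hf (vN1 M ltac:(lia)) ltac:(lia).
  have := Fseq_diag_step Hf (i := N.-1) ltac:(lia).
  lia.
have below_forced : f N.-1 M < f N.-1 N.-1 \/ f N M = f N.-1 N.-1 - 1.
  case: (f N.-1 M =P f N.-1 N.-1) => [/(Fseq_forced Hf vNM ltac:(lia)) -> | ne]; last lia.
  by right.
rewrite Lf_pred // Uf_pred // in hx.
(* With c := f N M, a := f N.-1 M and d := f N.-1 M.+1 we have a - 1 <= c <= a <= d:
   this makes the window [L, U] nonempty and, when d = f N.-1 N.-1, makes it contain d - 1. *)
apply: (Fseq_extend Hf); rewrite ?Lf_pred ?Uf_pred //; try by rewrite /valid; lia.
- exact: Fseq_leN Hf.
- by case: eqP hx; lia.
- by move=> _; case: eqP hx; lia.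
- by move=> _ eq_diag; rewrite eq_diag eqxx in hx.
Qed.

Lemma Fseq_close_row : (M + 2 = N)%N ->
  is_Fseq n N M.+1 (upd f N M.+1 (f N.-1 N.-1 - 1)).
Proof.
move=> eqN; have [diag_pos _] := Fseq_diag_bounds Hf (i := N.-1) ltac:(lia).
apply: (Fseq_extend Hf _ (Fseq_leN Hf)) => //; by rewrite /valid; lia.
Qed.

Lemma Fseq_close_diag x : (M + 1 = N)%N ->
  x = f N.-1 N.-1 + 1 \/ x = f N.-1 N.-1 - 1 -> 0 < x -> x < 2 * n%:Z - N%:Z ->
  is_Fseq n N N (upd f N N x).
Proof.
move=> eqN x_step x_gt0 x_lt.
(* x + N is even, so x < 2n - N gives the diagonal bound x <= 2n - N - 2. *)
have [z ez] := Fseq_diag_parity Hf (i := N.-1) ltac:(lia).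
apply: (Fseq_extend Hf _ (Fseq_leN Hf)) => //; try by rewrite /valid; lia.
by split => //; rewrite /= in ez; lia.
Qed.

Lemma Fseq_new_row x : M = N -> N%:Z < 2 * n%:Z - 3 ->
  (if f N 0%N == f N N then x = f N N - 1
   else x = Num.max 0 (f N 0%N - 1) \/ x = f N 0%N) ->
  is_Fseq n N.+1 0 (upd f N.+1 0 x).
Proof.
move=> eqM ltNn hx.
have vN0 : valid N M N 0 by rewrite /valid; lia.
have f_N0_ge0 := Fseq_nonneg Hf vN0.
have [diag_pos _] := Fseq_diag_bounds Hf (i := N) ltac:(lia).
apply: (Fseq_extend Hf); rewrite ?Lf_col0 ?Uf_col0 //; try by rewrite /valid; lia.
- by case: eqP hx; lia.
- by move=> _ /=; case: eqP hx; lia.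
- by move=> _ /= eq_diag; rewrite eq_diag eqxx in hx.
Qed.

End OneStepExtensions.

Theorem proposition1 (n N M : nat) (f : nat -> nat -> int) :
  (M <= N)%N -> N%:Z <= 2 * n%:Z - 3 ->
  is_Fseq n N M f ->
  ((M < N)%N \/ N%:Z < 2 * n%:Z - 3) ->
  [/\
   (* 1. *)
   ((M + 2 < N)%N ->
      forall x : int,
        (if f N.-1 M.+1 == f N.-1 N.-1 then x = f N.-1 N.-1 - 1
         else x = Lf f N M.+1 \/ x = Uf f N M.+1) ->
        is_Fseq n N M.+1 (upd f N M.+1 x)),
   (* 2. *)
   ((M + 2 = N)%N ->
        is_Fseq n N M.+1 (upd f N M.+1 (f N.-1 N.-1 - 1))),
   (* 3. *)
   ((M + 1 = N)%N ->
      (1 < f N.-1 N.-1 -> is_Fseq n N N (upd f N N (f N.-1 N.-1 - 1))) /\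
      (f N.-1 N.-1 < 2 * n%:Z - N%:Z - 1 ->
          is_Fseq n N N (upd f N N (f N.-1 N.-1 + 1)))) &
   (* 4. *)
   (M = N ->
      forall x : int,
        (if f N 0%N == f N N then x = f N N - 1
         else x = Num.max 0 (f N 0%N - 1) \/ x = f N 0%N) ->
        is_Fseq n N.+1 0 (upd f N.+1 0 x))].
Proof.
move=> _ _ Hf N_small; split.
- by move=> ltMN x; apply: (Fseq_extend_row Hf).
- exact: (Fseq_close_row Hf).
- move=> eqN; have [diag_pos diag_le] := Fseq_diag_bounds Hf (i := N.-1) ltac:(lia).
  by split=> bound; apply: (Fseq_close_diag Hf) => //; lia.
- by move=> eqM x; apply: (Fseq_new_row Hf) => //; lia.
Qed.
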